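(* Let $n \ge 1$, let $\alpha_w, \alpha_n \in (0,1)$ with $\alpha_w < \alpha_n$, and let $w_1, \dots, w_n \in \mathbb{R}_{\ge 0}$ with $W := \sum_{i=1}^n w_i \neq 0$. Then there exist integers $t_1, \dots, t_n \in \mathbb{Z}_{\ge 0}$, with $T := \sum_{i=1}^n t_i$, such that for every $S \subseteq [n]$ with $w(S) < \alpha_w W$ we have $t(S) < \alpha_n T$, and $$T \le \left\lceil \frac{\alpha_w(1-\alpha_w)}{\alpha_n - \alpha_w}\, n \right\rceil.$$
   Context: $[n] := \{1,\dots,n\}$. For $S \subseteq [n]$, $w(S) := \sum_{i\in S} w_i$ and $t(S) := \sum_{i \in S} t_i$. (The Weight Restriction problem asks, given $\alpha_w,\alpha_n$ and the weights, to find nonnegative integers $t_1,\dots,t_n$ minimizing $T$ subject to the displayed constraint; the theorem asserts existence of a feasible assignment, equivalently of a solution, with $T$ bounded as stated.) *)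

From HB Require Import structures.
From mathcomp Require Import all_boot all_order all_algebra.
From mathcomp Require Import reals.
Set Implicit Arguments. Unset Strict Implicit. Unset Printing Implicit Defensive.

From HB Require Import structures.
From mathcomp Require Import all_boot all_order all_algebra.
From mathcomp Require Import reals.
From mathcomp Require Import ring lra.

(* Apportion by a divisor method whose rounding threshold is alpha_w: for a
   common multiplier s > 0 every t_i lies in [s w_i + alpha_w - 1, s w_i + alpha_w],
   and raising s past successive thresholds reaches every total T.  Summing
   these bounds over S and its complement gives
   (1 - alpha_w) t(S) - alpha_w t(~S) <= s (w(S) - alpha_w W) + alpha_w (1 - alpha_w) n,
   which is < (alpha_n - alpha_w) T when w(S) < alpha_w W and T is at least
   alpha_w (1 - alpha_w) n / (alpha_n - alpha_w); this rearranges to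
   t(S) < alpha_n T. *)

Set Implicit Arguments.
Unset Strict Implicit.
Unset Printing Implicit Defensive.
Import Order.TTheory GRing.Theory Num.Theory.
Local Open Scope ring_scope.

Section DivisorRounding.

Variables (R : realFieldType) (I : finType).

Definition divisor_rounding (a s : R) (w : I -> R) (t : I -> nat) :=
  forall i, s * w i + a - 1 <= (t i)%:R /\ (t i)%:R <= s * w i + a.

Variables (a : R) (w : I -> R).
Hypotheses (a_ge0 : 0 <= a) (a_le1 : a <= 1) (w_ge0 : forall i, 0 <= w i).

Lemma divisor_rounding_incr s t j :
  0 < w j -> divisor_rounding a s w t ->
  exists s' t', 0 <= s' /\ (\sum_i t' i = (\sum_i t i).+1)%N /\
                divisor_rounding a s' w t'.
Proof.
move=> wj_gt0 rnd_t.
(* thr i is the multiplier at which t i + 1 becomes admissible; moving to the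
   least threshold keeps all other coordinates admissible. *)
pose thr i := ((t i)%:R + 1 - a) / w i.
have [j' wj'_gt0 thr_min] := @arg_minP _ _ _ j (fun i => 0 < w i) thr wj_gt0.
have s_le_thr i : 0 < w i -> s <= thr i.
  by move=> wi_gt0; rewrite /thr ler_pdivlMr //; have := rnd_t i; lra.
have thr_ge0 : 0 <= thr j'.
  by rewrite /thr divr_ge0 ?(ltW wj'_gt0) // -addrA addr_ge0 ?subr_ge0.
exists (thr j'), (fun i => (t i + (i == j'))%N); split=> //; split.
  have delta_sum : (\sum_i (i == j') = 1)%N.
    by rewrite (bigD1 j') //= eqxx big1 // => k /negPf ->.
  by rewrite big_split /= delta_sum addn1.
move=> i; have [lo_i hi_i] := rnd_t i.
have [->|ij'] := eqVneq i j'.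
  rewrite addn1 -natr1 /thr mulrAC -mulrA divff ?gt_eqF // mulr1; split; lra.
rewrite addn0; split; last first.
  by have := ler_wpM2r (w_ge0 i) (s_le_thr j' wj'_gt0); lra.
have [wi_gt0|] := ltP 0 (w i).
  by have := thr_min i wi_gt0; rewrite {2}/thr ler_pdivlMr //; lra.
move=> wi_le0; have -> : w i = 0 by apply/le_anti; rewrite wi_le0 w_ge0.
by rewrite mulr0 add0r (le_trans _ (ler0n R (t i))) // subr_le0.
Qed.

Lemma divisor_rounding_exists K :
  (exists i, 0 < w i) ->
  exists s t, 0 <= s /\ (\sum_i t i = K)%N /\ divisor_rounding a s w t.
Proof.
move=> [j wj_gt0]; elim: K => [|K [s [t [s_ge0 [sum_t rnd_t]]]]].
  exists 0, (fun=> 0%N); split=> //; split; first by rewrite big1.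
  by move=> i; rewrite mul0r add0r subr_le0; split.
by rewrite -sum_t; exact: divisor_rounding_incr wj_gt0 rnd_t.
Qed.

Variables (s : R) (t : I -> nat).
Hypothesis rnd_t : divisor_rounding a s w t.

Lemma divisor_rounding_gt0 : a < 1 -> 0 <= s -> (0 < \sum_i t i)%N -> 0 < s.
Proof.
move=> a_lt1 s_ge0 sum_t_gt0; rewrite lt_neqAle s_ge0 andbT.
apply: contraTneq sum_t_gt0 => s_eq0; rewrite -leqNgt leqn0 sum_nat_eq0.
apply/forallP => i; have [_] := rnd_t i; rewrite -s_eq0 mul0r add0r.
by move=> /le_lt_trans/(_ a_lt1); rewrite ltrn1 ltnS leqn0.
Qed.

Lemma divisor_rounding_sum_le (A : {pred I}) :
  (\sum_(i in A) t i)%:R <= s * \sum_(i in A) w i + a * #|A|%:R.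
Proof.
rewrite natr_sum mulr_sumr mulr_natr -sumr_const -big_split /=.
by apply: ler_sum => i _; case: (rnd_t i).
Qed.

Lemma divisor_rounding_sum_ge (A : {pred I}) :
  s * \sum_(i in A) w i - (1 - a) * #|A|%:R <= (\sum_(i in A) t i)%:R.
Proof.
rewrite natr_sum mulr_sumr mulr_natr -sumr_const -sumrB.
by apply: ler_sum => i _; have [] := rnd_t i; lra.
Qed.

(* Weighting the upper bound on S by 1 - a and the lower bound on its
   complement by a makes the rounding errors add up to a (1 - a) #|I|, while
   the multiplier terms add up to s (w(S) - a W) < 0. *)
Lemma divisor_rounding_sum_lt (b : R) :
  a < b -> 0 < s -> a * (1 - a) * #|I|%:R <= (b - a) * (\sum_i t i)%:R ->
  forall S : {set I}, \sum_(i in S) w i < a * \sum_i w i ->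
    (\sum_(i in S) t i)%:R < b * (\sum_i t i)%:R.
Proof.
move=> a_lt_b s_gt0 sum_t_large S wS_small.
rewrite [X in _ < _ * X](bigID [pred i | i \in S]) /= in wS_small.
rewrite [in X in _ <= _ * X](bigID [pred i | i \in S]) /= in sum_t_large.
rewrite [X in _ < _ * X%:R](bigID [pred i | i \in S]) /= natrD.
rewrite natrD -(cardC S) natrD in sum_t_large.
have le_S := divisor_rounding_sum_le S.
have ge_C := divisor_rounding_sum_ge [predC S].
set tS := (\sum_(i in S) t i)%:R in le_S sum_t_large *.
set tC := (\sum_(i in [predC S]) t i)%:R in ge_C sum_t_large *.
set wS := \sum_(i in S) w i in le_S wS_small.
set wC := \sum_(i in [predC S]) w i in ge_C wS_small.
set cS := #|S|%:R in le_S sum_t_large.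
set cC := #|[predC S]|%:R in ge_C sum_t_large.
have err_S : (1 - a) * tS <= (1 - a) * (s * wS + a * cS).
  by rewrite ler_wpM2l // subr_ge0.
have err_C := ler_wpM2l a_ge0 ge_C.
have gain : s * (wS - a * (wS + wC)) < 0 by rewrite pmulr_rlt0 // subr_lt0.
lra.
Qed.

End DivisorRounding.

Theorem theorem1 (R : realType) (n : nat) (alpha_w alpha_n : R) (w : 'I_n -> R) :
  (1 <= n)%N ->
  0 < alpha_w -> alpha_w < 1 ->
  0 < alpha_n -> alpha_n < 1 ->
  alpha_w < alpha_n ->
  (forall i, 0 <= w i) ->
  \sum_(i < n) w i != 0 ->
  exists t : 'I_n -> nat,
    (forall S : {set 'I_n},
        \sum_(i in S) w i < alpha_w * \sum_(i < n) w i ->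
        ((\sum_(i in S) t i)%N)%:R < alpha_n * ((\sum_(i < n) t i)%N)%:R)
    /\ (((\sum_(i < n) t i)%N)%:Z
          <= Num.ceil (alpha_w * (1 - alpha_w) / (alpha_n - alpha_w) * n%:R))%R.
Proof.
move=> n_gt0 aw_gt0 aw_lt1 _ _ aw_lt_an w_ge0 W_neq0.
have [i /andP[_ wi_gt0]] := psumr_neq0P (fun i _ => w_ge0 i) (elimN eqP W_neq0).
set T0 := alpha_w * (1 - alpha_w) / (alpha_n - alpha_w) * n%:R.
have T0_gt0 : 0 < T0 by rewrite !mulr_gt0 ?invr_gt0 ?subr_gt0 ?ltr0n.
have ceil_T0_ge0 : 0 <= Num.ceil T0 by rewrite ceil_ge0; lra.
have [s [t [s_ge0 [sum_t rnd_t]]]] :=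
  divisor_rounding_exists (ltW aw_gt0) (ltW aw_lt1) w_ge0 `|Num.ceil T0|%N
    (ex_intro _ i wi_gt0).
have T0_le_T : T0 <= (\sum_i t i)%:R.
  by rewrite sum_t natr_absz ger0_norm // ceil_ge.
exists t; split; last by rewrite sum_t gez0_abs.
have sum_t_gt0 : (0 < \sum_i t i)%N by rewrite -(ltr_nat R) (lt_le_trans T0_gt0).
have s_gt0 := divisor_rounding_gt0 rnd_t aw_lt1 s_ge0 sum_t_gt0.
have T0_scaled : (alpha_n - alpha_w) * T0 = alpha_w * (1 - alpha_w) * n%:R.
  by rewrite /T0; field; rewrite subr_eq0 gt_eqF.
have T_large :
    alpha_w * (1 - alpha_w) * #|'I_n|%:R <= (alpha_n - alpha_w) * (\sum_i t i)%:R.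
  by rewrite card_ord -T0_scaled ler_wpM2l // subr_ge0 ltW.
exact: (divisor_rounding_sum_lt (ltW aw_gt0) (ltW aw_lt1) rnd_t aw_lt_an s_gt0
         T_large).
Qed.
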